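(* Let $N\ge 1$, let $\beta$ be a non-negative integer, and let $\mathbb{C}[x]=\mathbb{C}[x_1,\dots,x_N]$. For $Q$ in the algebra $\mathcal{H}_0'$ (defined in the context) and every $f\in\mathbb{C}[x]$, $$\sigma^A(Qf)=\rho^A(Q)\,\sigma^A(f).$$
   Context: Operators on $\mathbb{C}[x]$: $s_{ij}$ ($i\neq j$) swaps $x_i$ and $x_j$ in the argument of a function. The Dunkl operators are $D^A_j=\frac{\partial}{\partial x_j}+\beta\sum_{k\neq j}\frac{1-s_{jk}}{x_j-x_k}$, and the Cherednik operators are $\hat D^A_j=x_jD^A_j+\beta\sum_{k<j}s_{jk}$ ($j=1,\dots,N$). $\mathcal{H}_0'$ denotes the algebra of operators on $\mathbb{C}[x]$ generated by the $\hat D^A_j$ and the $s_{ij}$. Define $\tilde a^{\dagger}_j=\frac{1}{\sqrt2}\left(-D^A_j+2x_j\right)$ and $\tilde a_j=\frac{1}{\sqrt2}D^A_j$ (these are the conjugates $e^{\sum_k x_k^2/2}\circ\frac{1}{\sqrt2}(\mp D^A_j+x_j)\circ e^{-\sum_k x_k^2/2}$); the $\tilde a^\dagger_j$ mutually commute. $\rho^A$ denotes the algebra homomorphism from the operator algebra generated by $x_j$, $D^A_j$, $s_{ij}$ into the operators on $\mathbb{C}[x]$ determined by $\rho^A(x_j)=\tilde a^\dagger_j$, $\rho^A(D^A_j)=\tilde a_j$, $\rho^A(s_{ij})=s_{ij}$; in particular $\rho^A(\hat D^A_j)=\tilde a^\dagger_j\tilde a_j+\beta\sum_{k<j}s_{jk}$.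 The linear map $\sigma^A:\mathbb{C}[x]\to\mathbb{C}[x]$ is $\sigma^A(f)=f(\tilde a^\dagger_1,\dots,\tilde a^\dagger_N)\cdot 1$. *)

From HB Require Import structures.
From mathcomp Require Import all_boot all_order all_algebra all_fingroup.
From mathcomp Require Import mpoly.
From Stdlib Require Import ClassicalEpsilon.
Set Implicit Arguments. Unset Strict Implicit. Unset Printing Implicit Defensive.
Import Order.TTheory GRing.Theory Num.Theory.
Local Open Scope ring_scope.

Section Ops.
Variables (C : numClosedFieldType) (N : nat) (beta : nat).

Notation poly := {mpoly C[N]}.
Definition op := poly -> poly.

Definition swap (i j : 'I_N) : op := fun f => msym (tperm i j) f.

(* the divided difference (f - s_{jk} f)/(x_j - x_k): the (unique, for j <> k)
   polynomial g with (x_j - x_k) g = f - s_{jk} f *)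
Definition divdiff (j k : 'I_N) : op := fun f =>
  epsilon (inhabits 0) (fun g : poly => ('X_j - 'X_k) * g = f - swap j k f).

Definition dunkl (j : 'I_N) : op := fun f =>
  f^`M(j) + beta%:R *: \sum_(k < N | k != j) divdiff j k f.

Definition cherednik (j : 'I_N) : op := fun f =>
  'X_j * dunkl j f + beta%:R *: \sum_(k < N | (k < j)%N) swap j k f.

Definition adag (j : 'I_N) : op := fun f =>
  (sqrtC 2)^-1 *: (- dunkl j f + 2%:R *: ('X_j * f)).
Definition aop (j : 'I_N) : op := fun f => (sqrtC 2)^-1 *: dunkl j f.

Definition rho_cherednik (j : 'I_N) : op := fun f =>
  adag j (aop j f) + beta%:R *: \sum_(k < N | (k < j)%N) swap j k f.

(* sigma^A(f) = f(adag_1, ..., adag_N) . 1 (the adag_j commute) *)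
Definition adag_mono (m : 'X_{1..N}) : op :=
  foldr (fun i g => iter (m i) (adag i) \o g) id (enum 'I_N).
Definition sigmaA (f : poly) : poly :=
  \sum_(m <- msupp f) f@_m *: adag_mono m 1.
End Ops.

(* Syntactic elements of the algebra H_0' generated by the \hat D_j and s_{ij}. *)
Inductive H0expr (C : Type) (N : nat) : Type :=
| HD of 'I_N
| HS of 'I_N & 'I_N
| HOne
| HScale of C & H0expr C N
| HAdd of H0expr C N & H0expr C N
| HMul of H0expr C N & H0expr C N.

Fixpoint evalH (C : numClosedFieldType) (N : nat) (gD : 'I_N -> op C N)
  (Q : H0expr C N) : op C N :=
  match Q with
  | HD j => gD j
  | HS i j => swap i j
  | HOne => id
  | HScale c Q1 => fun f => c *: evalH gD Q1 f
  | HAdd Q1 Q2 => fun f => evalH gD Q1 f + evalH gD Q2 f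
  | HMul Q1 Q2 => fun f => evalH gD Q1 (evalH gD Q2 f)
  end.

From HB Require Import structures.
From mathcomp Require Import all_boot all_order all_algebra all_fingroup.
From mathcomp Require Import ssrcomplements mpoly ring.
From Stdlib Require Import ClassicalEpsilon.
Set Implicit Arguments. Unset Strict Implicit. Unset Printing Implicit Defensive.
Import GRing.Theory Num.Theory.
Local Open Scope ring_scope.

(* σ^A is the linear map fixed by σ^A(1) = 1 and
   σ^A(x_l f) = ã†_l σ^A(f); the second rule holds because the ã†_l commute,
   which comes down to the commutativity of the Dunkl operators and the
   symmetry of the commutators [D_j, x_l].  Induction on f along these two
   rules shows that σ^A commutes with every s_ij (the ã†_l are S_N-equivariant)
   and that D_j σ^A = √2 σ^A D_j, i.e. σ^A D_j = ã_j σ^A.  Hence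
   σ^A(x_j D_j f) = ã†_j ã_j σ^A(f), which is the claim for Q = \hat D_j;
   the general case follows by induction on Q. *)

Section CommutingIterates.
Variables (T : Type) (I : eqType) (F : I -> T -> T).
Hypothesis F_comm : forall i j x, F i (F j x) = F j (F i x).

Lemma iter_comm i j n k x :
  iter n (F i) (iter k (F j) x) = iter k (F j) (iter n (F i) x).
Proof.
have F_iter y : F i (iter k (F j) y) = iter k (F j) (F i y).
  by elim: k y => //= k IH y; rewrite F_comm IH.
by elim: n => //= n ->; apply: F_iter.
Qed.

Definition iter_prod (q : seq I) (m : I -> nat) : T -> T :=
  foldr (fun i g => iter (m i) (F i) \o g) id q.

Lemma iter_prod_incr q (m m' : I -> nat) l x :
    (forall i, m' i = m i + (i == l))%N ->
  iter_prod q m' x = iter (count_mem l q) (F l) (iter_prod q m x).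
Proof.
move=> m'E; elim: q => //= i q; rewrite /iter_prod /= => ->; rewrite m'E.
have [->|_] := eqVneq i l; last by rewrite addn0 add0n iter_comm.
by rewrite -!iterD addn1 add1n addSn addnC.
Qed.

Lemma iter_prod0 q (m : I -> nat) x :
  (forall i, m i = 0)%N -> iter_prod q m x = x.
Proof. by move=> m0; elim: q => //= i q; rewrite /iter_prod /= m0 => ->. Qed.

End CommutingIterates.

Section MpolyFacts.
Variables (R : ringType) (n : nat).

Lemma mpoly_indX (P : {mpoly R[n]} -> Prop) :
    P 1 -> (forall f g, P f -> P g -> P (f + g)) ->
    (forall c f, P f -> P (c *: f)) -> (forall i f, P f -> P ('X_i * f)) ->
  forall f, P f.
Proof.
move=> P1 PD PZ PX.
have PXM m f : P f -> P ('X_[m] * f).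
  rewrite mpolyXE_id; move: f; elim/big_rec: _ => [|i g _ Pg] f Pf.
    by rewrite mul1r.
  rewrite -mulrA; elim: (m i) => [|k IHk].
    by rewrite expr0 mul1r; apply: Pg.
  by rewrite exprS -mulrA; apply: PX.
elim/mpolyind => [|c m f _ _ Pf]; first by rewrite -(scale0r 1); apply: PZ.
by apply: PD => //; apply: PZ; rewrite -[X in P X]mulr1; apply: PXM.
Qed.

Lemma mderivXU (i j : 'I_n) : ('X_j : {mpoly R[n]})^`M(i) = (j == i)%:R%:MP.
Proof.
rewrite mderivX mnm1E; have [->|_] := eqVneq j i; last by rewrite scale0r.
have -> : (U_(i) - U_(i))%MM = 0%MM.
  by apply/mnmP => k; rewrite mnmBE subnn mnm0E.
by rewrite mpolyX0 scale1r.
Qed.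

Lemma mpoly_linear_eqX (V : lmodType R) (F G : {linear {mpoly R[n]} -> V}) :
    F 1 = G 1 -> (forall i f, F f = G f -> F ('X_i * f) = G ('X_i * f)) ->
  F =1 G.
Proof.
move=> FG1 FGX; elim/mpoly_indX => [//|f g FGf FGg|c f FGf|i f /FGX //].
  by rewrite !linearD FGf FGg.
by rewrite !linearZ FGf.
Qed.

End MpolyFacts.

Section MpolyLinearExtension.
Variables (R : comRingType) (n : nat) (V : lmodType R) (v : 'X_{1..n} -> V).

Definition mlinext (f : {mpoly R[n]}) : V := \sum_(m <- msupp f) f@_m *: v m.

Lemma mlinextE k f : (msize f <= k)%N ->
  mlinext f = \sum_(m : 'X_{1..n < k}) f@_m *: v m.
Proof.
move=> le_fk; pose I : subFinType _ := 'X_{1..n < k}.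
rewrite /mlinext (big_mksub I) ?msupp_uniq //=; last first.
  by move=> m /msize_mdeg_lt /leq_trans; apply.
by rewrite big_rmcond //= => m /memN_msupp_eq0 ->; rewrite scale0r.
Qed.

Lemma mlinext_is_linear : linear mlinext.
Proof.
move=> c f g; pose k := maxn (msize f) (msize g).
have le_fg : (msize (c *: f + g) <= k)%N.
  rewrite (leq_trans (msizeD_le _ _)) // geq_max leq_maxr andbT.
  exact: leq_trans (msizeZ_le _ _) (leq_maxl _ _).
rewrite (mlinextE le_fg) (mlinextE (leq_maxl (msize f) (msize g))).
rewrite (mlinextE (leq_maxr (msize f) (msize g))) scaler_sumr -big_split /=.
by apply: eq_bigr => m _; rewrite mcoeffD mcoeffZ scalerDl scalerA.
Qed.

HB.instance Definition _ :=
  GRing.isLinear.Build R {mpoly R[n]} V _ mlinext mlinext_is_linear.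

Lemma mlinextX m : mlinext 'X_[m] = v m.
Proof. by rewrite /mlinext msuppX big_seq1 mcoeffX eqxx scale1r. Qed.

Lemma mlinextXM (A : {linear V -> V}) i f :
    (forall m, v (m + U_(i))%MM = A (v m)) ->
  mlinext ('X_i * f) = A (mlinext f).
Proof.
move=> vXU; rewrite {1}(mpolyE f) mulr_sumr linear_sum.
rewrite [in RHS]/mlinext linear_sum.
apply: eq_bigr => m _; rewrite -scalerAr linearZ linearZ /=.
by rewrite mulrC -mpolyXD mlinextX vXU.
Qed.

End MpolyLinearExtension.

Section Swaps.
Variables (C : numClosedFieldType) (N : nat).
Local Notation P := {mpoly C[N]}.
Local Notation sw := (@swap C N).
Implicit Types (f : P) (a b i j l : 'I_N).

HB.instance Definition _ i j :=
  GRing.RMorphism.copy (sw i j) (msym (tperm i j)).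

Lemma swap_is_scalable i j : scalable (sw i j).
Proof. by move=> c f; rewrite /swap msymZ. Qed.

HB.instance Definition _ i j :=
  GRing.isScalable.Build C P P *:%R (sw i j) (@swap_is_scalable i j).

Lemma swapX i j l : sw i j 'X_l = 'X_(tperm i j l).
Proof.
rewrite /swap msymX tpermV; congr mpolyX; apply/mnmP => k.
by rewrite mnmE !mnm1E (canF_eq (tpermK i j)).
Qed.

Lemma swapC i j f : sw i j f = sw j i f.
Proof. by rewrite /swap tpermC. Qed.

Lemma swap_swap a b i j f :
  sw i j (sw a b f) = sw a b (sw (tperm a b i) (tperm a b j) f).
Proof.
rewrite /swap -!msymMm -tpermJ; congr msym.
by rewrite /conjg tpermV -!mulgA tperm2 mulg1.
Qed.

End Swaps.

Section DividedDifference.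
Variables (C : numClosedFieldType) (N : nat) (j k : 'I_N).
Hypothesis njk : j != k.
Local Notation P := {mpoly C[N]}.
Local Notation sw := (@swap C N j k).
Local Notation dd := (@divdiff C N j k).
Local Notation d := ('X_j - 'X_k : P).
Implicit Types (f g : P) (l : 'I_N).

Lemma XsubX_neq0 : d != 0.
Proof.
rewrite subr_eq0; apply/eqP => /(congr1 (mcoeff U_(j))).
by rewrite !mcoeffXU eqxx eq_sym (negbTE njk) => /eqP; rewrite oner_eq0.
Qed.

Lemma XsubX_swapX l : 'X_l - sw 'X_l = d * ((l == j)%:R - (l == k)%:R)%:MP.
Proof.
rewrite swapX mulrC mul_mpolyC.
case: (tpermP j k l) => [->|->|/eqP nlj /eqP nlk].
- by rewrite eqxx (negbTE njk) subr0 scale1r.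
- by rewrite eq_sym (negbTE njk) eqxx sub0r scaleN1r opprB.
- by rewrite (negbTE nlj) (negbTE nlk) !subrr scale0r.
Qed.

Lemma divdiff_twisted_leibniz f g a b :
    d * a = f - sw f -> d * b = g - sw g ->
  d * (f * b + a * sw g) = f * g - sw (f * g).
Proof.
move=> da db; rewrite mulrDr mulrCA db mulrA da rmorphM /=.
by rewrite mulrBr mulrBl addrA subrK.
Qed.

Lemma divdiff_exists f : exists g, d * g = f - sw f.
Proof.
elim/mpoly_indX: f => [|f g [a da] [b db]|c f [a da]|l f [a da]].
- by exists 0; rewrite rmorph1 subrr mulr0.
- by exists (a + b); rewrite mulrDr da db rmorphD opprD addrACA.
- by exists (c *: a); rewrite -scalerAr da linearZ scalerBr.
- exists ('X_l * a + ((l == j)%:R - (l == k)%:R)%:MP * sw f).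
  by apply: divdiff_twisted_leibniz => //; rewrite XsubX_swapX.
Qed.

Lemma divdiffP f : d * dd f = f - sw f.
Proof. exact: epsilon_spec (divdiff_exists f). Qed.

Lemma divdiff_unique f g : d * g = f - sw f -> dd f = g.
Proof. by move=> dg; apply: (mulfI XsubX_neq0); rewrite divdiffP. Qed.

Lemma divdiff_is_linear : linear dd.
Proof.
move=> c f g; apply: divdiff_unique.
by rewrite mulrDr -scalerAr !divdiffP linearP /= scalerBr opprD addrACA.
Qed.

Lemma divdiff1 : dd 1 = 0.
Proof. by apply: divdiff_unique; rewrite rmorph1 subrr mulr0. Qed.

Lemma divdiffXM l f :
  dd ('X_l * f)
    = 'X_l * dd f + ((l == j)%:R - (l == k)%:R)%:MP * sw f.
Proof.
apply: divdiff_unique; apply: divdiff_twisted_leibniz (divdiffP f).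
by rewrite XsubX_swapX.
Qed.

End DividedDifference.

Lemma sqrtC2_neq0 (C : numClosedFieldType) : sqrtC 2 != 0 :> C.
Proof. by rewrite sqrtC_eq0 pnatr_eq0. Qed.

Section DunklOperators.
Variables (C : numClosedFieldType) (N : nat) (beta : nat).
Local Notation P := {mpoly C[N]}.
Local Notation sw := (@swap C N).
Local Notation D := (@dunkl C N beta).
Local Notation A := (@adag C N beta).
Implicit Types (f g : P) (a b i j k l : 'I_N).

Definition dunkl_commX j l f : P :=
  if l == j then f + beta%:R *: \sum_(k < N | k != j) sw j k f
  else - (beta%:R *: sw j l f).

Lemma swap_sum_swap a b i f :
  \sum_(k < N | k != i) sw i k (sw a b f)
    = sw a b (\sum_(k < N | k != tperm a b i) sw (tperm a b i) k f).
Proof.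
rewrite linear_sum /= (reindex_inj (@perm_inj _ (tperm a b))) /=.
apply: eq_big => [k|k _]; first by rewrite (canF_eq (tpermK a b)).
by rewrite swap_swap tpermK.
Qed.

Lemma dunkl_commX_swap a b i l f :
  dunkl_commX i (tperm a b l) (sw a b f)
    = sw a b (dunkl_commX (tperm a b i) l f).
Proof.
rewrite /dunkl_commX (canF_eq (tpermK a b)); case: eqP => [_|_] /=.
  by rewrite swap_sum_swap linearD linearZ.
by rewrite swap_swap tpermK [in RHS]linearN [in RHS]linearZ.
Qed.

Lemma dunkl_commX_sym i j : dunkl_commX i j =1 dunkl_commX j i.
Proof.
move=> f; rewrite /dunkl_commX [j == i]eq_sym.
by case: eqP => [->|_]; last rewrite swapC.
Qed.

Lemma dunkl_is_linear j : linear (D j).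
Proof.
move=> c f g; rewrite /dunkl linearP /=.
rewrite (eq_bigr (fun k => c *: divdiff j k f + divdiff j k g)); last first.
  by move=> k nkj; rewrite divdiff_is_linear // eq_sym.
by rewrite big_split /= -scaler_sumr !scalerDr !scalerA mulrC addrACA.
Qed.

HB.instance Definition _ j :=
  GRing.isLinear.Build C P P _ (D j) (dunkl_is_linear j).

Lemma dunkl1 j : D j 1 = 0.
Proof.
rewrite /dunkl -mpolyC1 mderivC add0r big1 ?scaler0 // => k nkj.
by rewrite mpolyC1 divdiff1 // eq_sym.
Qed.

Lemma dunklXM j l f : D j ('X_l * f) = 'X_l * D j f + dunkl_commX j l f.
Proof.
rewrite /dunkl mderivM mderivXU.
rewrite (eq_bigr (fun k => 'X_l * divdiff j k f
                   + ((l == j)%:R - (l == k)%:R)%:MP * sw j k f)); last first.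
  by move=> k nkj; rewrite divdiffXM // eq_sym.
rewrite big_split /= -mulr_sumr /dunkl_commX.
have [->|nlj] := eqVneq l j.
  rewrite (eq_bigr (fun k => sw j k f)) => [|k nkj]; last first.
    by rewrite eq_sym (negbTE nkj) subr0 mul1r.
  by rewrite -!mul_mpolyC /=; ring.
rewrite [\sum_(k < N | k != j) (_ * _)](bigD1 l) //=.
rewrite [\sum_(k < N | _ && _) _]big1 => [|k /andP[_ nkl]]; last first.
  by rewrite eq_sym (negbTE nkl) subrr mul0r.
by rewrite eqxx -!mul_mpolyC /=; ring.
Qed.

Lemma adagE j f :
  A j f = sqrtC 2 *: ('X_j * f) - (sqrtC 2)^-1 *: D j f.
Proof.
have r2 : (sqrtC 2)^-1 * 2 = sqrtC 2 :> C.
  by rewrite -{2}(sqrtCK 2) expr2 mulrA mulVf ?mul1r ?sqrtC2_neq0.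
by rewrite /adag scalerDr scalerA r2 scalerN addrC.
Qed.

Lemma adag_is_linear j : linear (A j).
Proof.
move=> c f g; rewrite !adagE (linearP (D j)) /=.
(* [ring] compares its atoms up to conversion, which would unfold [dunkl]
   (and [swap] below); generalizing the operator terms first avoids this. *)
move: (D j f) (D j g) => Df Dg; rewrite -!mul_mpolyC; ring.
Qed.

HB.instance Definition _ j :=
  GRing.isLinear.Build C P P _ (A j) (adag_is_linear j).

End DunklOperators.

(* From here on the Dunkl operators and the ã†_j enter only through the
   relations D1, DXM and AE; keeping them abstract also stops [rewrite] from
   unfolding [dunkl] while matching. *)
Section Intertwining.
Variables (C : numClosedFieldType) (N beta : nat).
Local Notation P := {mpoly C[N]}.
Local Notation sw := (@swap C N).
Local Notation c := (@dunkl_commX C N beta).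
Variables (D A : 'I_N -> {linear P -> P}).
Hypothesis D1 : forall j, D j 1 = 0.
Hypothesis DXM : forall j l f, D j ('X_l * f) = 'X_l * D j f + c j l f.
Hypothesis AE :
  forall j f, A j f = sqrtC 2 *: ('X_j * f) - (sqrtC 2)^-1 *: D j f.
Implicit Types (f g : P) (a b i j k l : 'I_N).

Lemma dunkl_swap a b i f : D i (sw a b f) = sw a b (D (tperm a b i) f).
Proof.
move: f; apply: (mpoly_linear_eqX (F := D i \o sw a b)
                                  (G := sw a b \o D (tperm a b i))) => /=.
  by rewrite rmorph1 !D1 linear0.
move=> l f IHf; rewrite rmorphM /= swapX !DXM IHf dunkl_commX_swap.
by rewrite [RHS]rmorphD rmorphM /= swapX.
Qed.

Lemma dunkl_commX_dunkl_diag i j f : i != j ->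
  c i i (D j f) + D i (c j i f) = c j i (D i f) + D j (c i i f).
Proof.
move=> nij; have split_sum g : \sum_(k < N | k != i) sw i k g
    = sw j i g + \sum_(k < N | (k != i) && (k != j)) sw i k g.
  by rewrite (bigD1 j) /= 1?swapC // eq_sym.
have dunkl_sum : D j (\sum_(k < N | k != i) sw i k f)
    = sw j i (D i f) + \sum_(k < N | (k != i) && (k != j)) sw i k (D j f).
  rewrite linear_sum (bigD1 j) /=; last by rewrite eq_sym.
  rewrite swapC dunkl_swap tpermL; congr (_ + _).
  by apply: eq_bigr => k /andP[_ nkj]; rewrite dunkl_swap (tpermD nij nkj).
rewrite /dunkl_commX eqxx (negbTE nij) linearN linearD !linearZ /=.
rewrite dunkl_sum split_sum dunkl_swap tpermR.
move: (sw j i (D i f)) (sw j i (D j f)) (\sum_(k < N | _ && _) _) => x y z.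
by rewrite -!mul_mpolyC; ring.
Qed.

Lemma dunkl_commX_dunkl i j l f :
  c i l (D j f) + D i (c j l f) = c j l (D i f) + D j (c i l f).
Proof.
have [<-//|nij] := eqVneq i j.
have [->|nli] := eqVneq l i; first exact: dunkl_commX_dunkl_diag.
have [->|nlj] := eqVneq l j.
  by symmetry; apply: dunkl_commX_dunkl_diag; rewrite eq_sym.
have nji : j != i by rewrite eq_sym.
rewrite /dunkl_commX (negbTE nli) (negbTE nlj) !linearN !linearZ /=.
rewrite !dunkl_swap (tpermD nji nli) (tpermD nij nlj).
exact: addrC.
Qed.

Lemma dunkl_comm i j f : D i (D j f) = D j (D i f).
Proof.
move: f; apply: (mpoly_linear_eqX (F := D i \o D j) (G := D j \o D i)) => /=.
  by rewrite !D1 !linear0.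
move=> l f IHf; rewrite !DXM !linearD !DXM IHf.
by rewrite -[LHS]addrA (dunkl_commX_dunkl i j l f) [LHS]addrA.
Qed.

Lemma adag_comm i j f : A i (A j f) = A j (A i f).
Proof.
rewrite !AE !linearB !linearZ /= !DXM dunkl_comm (dunkl_commX_sym beta i j).
move: (D i f) (D j f) (D j (D i f)) (c j i f) => Dif Djf DDf cf.
by rewrite -!mul_mpolyC; ring.
Qed.

Lemma adag_swap a b i f : A i (sw a b f) = sw a b (A (tperm a b i) f).
Proof.
rewrite !AE dunkl_swap (linearB (sw a b)) !(linearZZ (sw a b)) /=.
by rewrite rmorphM /= swapX tpermK.
Qed.

Lemma dunkl_adag j l f : D j (A l f) = A l (D j f) + sqrtC 2 *: c j l f.
Proof.
rewrite !AE linearB !linearZ /= DXM (dunkl_comm j l).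
move: (D l (D j f)) (D j f) (c j l f) => DDf Djf cf.
by rewrite -!mul_mpolyC; ring.
Qed.

(* For A := adag this is [sigmaA]: [adag_mono beta m] is [iter_prod] over
   [enum 'I_N]. *)
Local Notation sigma := (mlinext (fun m => iter_prod A (enum 'I_N) m 1)).

Lemma sigma1 : sigma 1 = 1.
Proof. by rewrite -mpolyX0 mlinextX iter_prod0 // => i; rewrite mnm0E. Qed.

Lemma sigmaXM l f : sigma ('X_l * f) = A l (sigma f).
Proof.
apply: mlinextXM => m.
have incr i : (m + U_(l))%MM i = (m i + (i == l))%N.
  by rewrite mnmDE mnm1E eq_sym.
rewrite (iter_prod_incr adag_comm _ _ incr).
by rewrite count_uniq_mem ?enum_uniq ?mem_enum.
Qed.

Lemma sigma_swap a b f : sigma (sw a b f) = sw a b (sigma f).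
Proof.
move: f; apply: (mpoly_linear_eqX (F := sigma \o sw a b)
                                  (G := sw a b \o sigma)) => /=.
  by rewrite rmorph1 sigma1 rmorph1.
by move=> l f IHf; rewrite rmorphM /= swapX !sigmaXM IHf adag_swap tpermK.
Qed.

Lemma sigma_commX j l f : sigma (c j l f) = c j l (sigma f).
Proof.
rewrite /dunkl_commX; case: eqP => _ /=; last first.
  by rewrite linearN linearZ /= sigma_swap.
rewrite linearD linearZ linear_sum /=.
by congr (_ + _ *: _); apply: eq_bigr => k _; apply: sigma_swap.
Qed.

Lemma dunkl_sigma j f : D j (sigma f) = sqrtC 2 *: sigma (D j f).
Proof.
elim/mpoly_indX: f => [|f g IHf IHg|k f IHf|l f IHf].
- by rewrite sigma1 D1 linear0 scaler0.
- by rewrite !linearD /= IHf IHg.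
- by rewrite !linearZ /= IHf !scalerA mulrC.
- rewrite sigmaXM dunkl_adag IHf DXM linearD /= sigmaXM sigma_commX.
  by rewrite scalerDr linearZ.
Qed.

Lemma sigma_cherednik j f :
  sigma ('X_j * D j f + beta%:R *: \sum_(k < N | (k < j)%N) sw j k f)
    = A j ((sqrtC 2)^-1 *: D j (sigma f))
      + beta%:R *: \sum_(k < N | (k < j)%N) sw j k (sigma f).
Proof.
rewrite linearD linearZ linear_sum /= sigmaXM dunkl_sigma.
rewrite scalerA mulVf ?sqrtC2_neq0 // scale1r.
by congr (_ + _ *: _); apply: eq_bigr => k _; apply: sigma_swap.
Qed.

End Intertwining.

Section SigmaA.
Variables (C : numClosedFieldType) (N beta : nat).
Local Notation P := {mpoly C[N]}.

HB.instance Definition _ := GRing.Linear.copy (@sigmaA C N beta)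
  (mlinext (fun m => adag_mono beta m 1)).

Lemma sigmaA_swap i j f :
  sigmaA beta (swap i j f) = swap i j (sigmaA beta f) :> P.
Proof.
exact: (@sigma_swap C N beta (fun j => dunkl beta j) (fun j => adag beta j)
         (@dunkl1 C N beta) (@dunklXM C N beta) (@adagE C N beta)).
Qed.

Lemma sigmaA_cherednik j f :
  sigmaA beta (cherednik beta j f) = rho_cherednik beta j (sigmaA beta f) :> P.
Proof.
exact: (@sigma_cherednik C N beta (fun j => dunkl beta j) (fun j => adag beta j)
         (@dunkl1 C N beta) (@dunklXM C N beta) (@adagE C N beta)).
Qed.

End SigmaA.

Theorem theorem2p4 (C : numClosedFieldType) (N : nat) (hN : (0 < N)%N)
  (beta : nat) (Q : H0expr C N) (f : {mpoly C[N]}) :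
  sigmaA beta (evalH (cherednik beta) Q f)
  = evalH (rho_cherednik beta) Q (sigmaA beta f).
Proof.
(* The identity holds for N = 0 as well. *)
elim: Q f => [j|i j||c Q IHQ|Q1 IHQ1 Q2 IHQ2|Q1 IHQ1 Q2 IHQ2] f /=.
- exact: sigmaA_cherednik.
- exact: sigmaA_swap.
- by [].
- by rewrite linearZ /= IHQ.
- by rewrite linearD /= IHQ1 IHQ2.
- by rewrite IHQ1 IHQ2.
Qed.
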